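(* Let $n\ge2$. The discriminant $\mathrm{Disc}\in\mathbb{R}[\mathrm{Her}(n)]$, $\mathrm{Disc}(A)=\prod_{1\le i<j\le n}(\lambda_i-\lambda_j)^2$ where $\lambda_1,\dots,\lambda_n$ are the eigenvalues of $A$, can be written as a sum of $2\binom{2n-1}{n-1}$ squares of elements of $\mathbb{R}[\mathrm{Her}(n)]$.
   Context: $\mathrm{Her}(n)=\{A\in\mathbb{C}^{n\times n}\mid\bar A=A^T\}$ viewed as a real vector space; $\mathbb{R}[\mathrm{Her}(n)]$ is its ring of real polynomial functions. *)

From HB Require Import structures.
From mathcomp Require Import all_boot all_order all_algebra.
From mathcomp Require Import complex.
From mathcomp Require Import Rstruct.
From mathcomp Require Import mpoly.
From Stdlib Require Rdefinitions.
Set Implicit Arguments. Unset Strict Implicit. Unset Printing Implicit Defensive.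
Import Order.TTheory GRing.Theory Num.Theory.
Local Open Scope ring_scope.
Local Open Scope complex_scope.

Definition CR := (complex Rdefinitions.R).

Definition is_hermitian (n : nat) (A : 'M[CR]_n) : bool :=
  A^T == map_mx (@conjc Rdefinitions.R) A.

Definition herm_coords (n : nat) (A : 'M[CR]_n) : 'I_(n * n + n * n) -> Rdefinitions.R :=
  fun k => row_mx (mxvec (map_mx (@complex.Re Rdefinitions.R) A))
                  (mxvec (map_mx (@complex.Im Rdefinitions.R) A)) 0 k.

(* Real polynomial functions on Her(n): evaluations of real polynomials in
   these coordinates. *)
Definition herm_polyfun (n : nat) (p : {mpoly Rdefinitions.R[n * n + n * n]})
  (A : 'M[CR]_n) : Rdefinitions.R := p.@[herm_coords A].

Definition eigenvalue_list (n : nat) (A : 'M[CR]_n) (s : seq CR) : Prop :=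
  char_poly A = \prod_(x <- s) ('X - x%:P).

Definition disc_of (s : seq CR) : CR :=
  \prod_(i < size s) \prod_(j < size s | (i < j)%N) (s`_i - s`_j) ^+ 2.

(* For f : 'I_n -> 'I_n let K_f(A) be the matrix whose k-th column is the
   f(k)-th column of A^k, and P_f(A) the sum of det K_(f o p)(A) over all
   permutations p; P_f is a polynomial in the entries of A which only depends on
   the multiset of values of f.  For a Hermitian A = U^* diag(l) U with U
   unitary, P_f(A) = det U^* * V(l) * per(U_f), where V is the Vandermonde
   determinant and U_f consists of the columns f(0), ..., f(n-1) of U.  As the
   rows of U are orthonormal, the sum of |per(U_f)|^2 over all f is n!, whence
   n! Disc(A) = sum_f |P_f(A)|^2.  Grouping the f by their multiset of values
   (there are C(2n-1, n-1) multisets) and splitting each |P_f(A)|^2 into the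
   squares of its real and imaginary parts gives 2 C(2n-1, n-1) squares of real
   polynomials in the coordinates of A. *)

From HB Require Import structures.
From mathcomp Require Import all_boot all_order all_algebra.
From mathcomp Require Import complex.
From mathcomp Require Import Rstruct.
From mathcomp Require Import mpoly.
From Stdlib Require Rdefinitions.
From mathcomp Require Import fingroup perm sesquilinear spectral.
Set Implicit Arguments. Unset Strict Implicit. Unset Printing Implicit Defensive.
Import GRing.Theory Num.Theory.
Local Open Scope ring_scope.

Section Permanent.
Variables (R : comNzRingType) (n : nat).

Definition permanent (M : 'M[R]_n) : R := \sum_(s : 'S_n) \prod_i M i (s i).

Lemma permanent_tr (M : 'M[R]_n) : permanent M^T = permanent M.
Proof.
rewrite /permanent (reindex_inj invg_inj); apply: eq_bigr => s _ /=.
rewrite (reindex_inj (@perm_inj _ s)); apply: eq_bigr => i _.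
by rewrite mxE permK.
Qed.

Lemma sum_det_hadamard_perm (U W : 'M[R]_n) :
  \sum_(p : 'S_n) \det (\matrix_(i, j) (U i j * W i (p j))) = \det U * permanent W.
Proof.
rewrite /permanent mulr_suml.
under eq_bigr do rewrite /determinant.
rewrite exchange_big /=; apply: eq_bigr => s _.
have split_prod p : \prod_i (\matrix_(i, j) (U i j * W i (p j))) i (s i) =
    \prod_i U i (s i) * \prod_i W i (p (s i)).
  by rewrite -big_split; apply: eq_bigr => i _; rewrite mxE.
under eq_bigr do rewrite split_prod mulrA.
rewrite -mulr_sumr; congr (_ * _).
rewrite [RHS](reindex_inj (mulgI s)); apply: eq_bigr => p _.
by apply: eq_bigr => i _; rewrite permM.
Qed.

End Permanent.

Section Krylov.
Variables (R : comNzRingType) (n : nat).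
Implicit Types (A P Q : 'M[R]_n.+1) (g : 'I_n.+1 -> 'I_n.+1).

Definition krylov_mx A g : 'M[R]_n.+1 := \matrix_(i, k) (A ^+ k) i (g k).

Definition krylov_sym A g : R := \sum_(p : 'S_n.+1) \det (krylov_mx A (g \o p)).

Lemma eq_krylov_sym A g h : g =1 h -> krylov_sym A g = krylov_sym A h.
Proof.
move=> eq_gh; apply: eq_bigr => p _; congr (\det _).
by apply/matrixP => i k; rewrite !mxE /= eq_gh.
Qed.

Lemma krylov_sym_perm A g (r : 'S_n.+1) : krylov_sym A (g \o r) = krylov_sym A g.
Proof.
rewrite [RHS](reindex_inj (mulIg r)); apply: eq_bigr => p _; congr (\det _).
by apply/matrixP => i k; rewrite !mxE /= permM.
Qed.

Lemma expr_conj_diag P Q (d : 'rV[R]_n.+1) k : Q *m P = 1%:M ->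
  (P *m diag_mx d *m Q) ^+ k = P *m diag_mx (\row_j d 0 j ^+ k) *m Q.
Proof.
move=> QP1; elim: k => [|k IHk].
  have -> : diag_mx (\row_j d 0 j ^+ 0) = 1%:M.
    by apply/matrixP => i j; rewrite !mxE expr0.
  by rewrite mulmx1 (mulmx1C QP1).
rewrite exprS IHk -mulmxE -!mulmxA (mulmxA Q) QP1 mul1mx (mulmxA (diag_mx d)).
rewrite mulmx_diag !mulmxA.
by congr (_ *m diag_mx _ *m _); apply/rowP => j; rewrite !mxE exprS.
Qed.

Lemma krylov_mx_conj_diag P Q (d : 'rV[R]_n.+1) g : Q *m P = 1%:M ->
  krylov_mx (P *m diag_mx d *m Q) g = P *m \matrix_(r, k) (d 0 r ^+ k * Q r (g k)).
Proof.
move=> QP1; apply/matrixP => i k.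
rewrite !mxE expr_conj_diag // -mulmxA mxE; apply: eq_bigr => r _.
by rewrite mul_diag_mx !mxE.
Qed.

Lemma krylov_sym_conj_diag P Q (d : 'rV[R]_n.+1) g : Q *m P = 1%:M ->
  krylov_sym (P *m diag_mx d *m Q) g =
  \det P * \det (Vandermonde n.+1 d) * permanent (colsub g Q).
Proof.
move=> QP1; rewrite -mulrA -(det_tr (Vandermonde _ _)) -sum_det_hadamard_perm mulr_sumr.
apply: eq_bigr => p _; rewrite krylov_mx_conj_diag // det_mulmx; congr (_ * \det _).
by apply/matrixP => r k; rewrite !mxE.
Qed.

End Krylov.

Lemma map_krylov_sym (R S : comNzRingType) (f : {rmorphism R -> S}) n
    (A : 'M[R]_n.+1) (g : 'I_n.+1 -> 'I_n.+1) :
  f (krylov_sym A g) = krylov_sym (map_mx f A) g.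
Proof.
rewrite rmorph_sum; apply: eq_bigr => p _; rewrite -det_map_mx; congr (\det _).
by apply/matrixP => i k; rewrite !mxE -rmorphXn /= mxE.
Qed.

Lemma char_poly_conj (R : comNzRingType) n (P Q D : 'M[R]_n) : Q *m P = 1%:M ->
  char_poly (P *m D *m Q) = char_poly D.
Proof.
move=> QP1.
have conj_X : map_mx polyC P *m 'X%:M *m map_mx polyC Q = 'X%:M.
  by rewrite mul_mx_scalar -scalemxAl -map_mxM (mulmx1C QP1) map_mx1 scalemx1.
have conj_char_poly_mx : char_poly_mx (P *m D *m Q) =
    map_mx polyC P *m char_poly_mx D *m map_mx polyC Q.
  by rewrite /char_poly_mx mulmxBr mulmxBl conj_X !map_mxM.
rewrite /char_poly conj_char_poly_mx !det_mulmx mulrC mulrA -det_mulmx -map_mxM.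
by rewrite QP1 map_mx1 det1 mul1r.
Qed.

Section SortFfun.
Variable n : nat.

Definition sorted_tuples := [set t : n.-tuple 'I_n | sorted leq (map val t)].

Definition sort_ffun (g : {ffun 'I_n -> 'I_n}) : n.-tuple 'I_n :=
  sort_tuple (relpre val leq) [tuple g i | i < n].

Lemma sort_ffun_sorted (g : {ffun 'I_n -> 'I_n}) : sort_ffun g \in sorted_tuples.
Proof. by rewrite inE sorted_map sort_sorted // => i j; apply: leq_total. Qed.

Lemma sort_ffun_perm (g : {ffun 'I_n -> 'I_n}) :
  exists r : 'S_n, g =1 tnth (sort_ffun g) \o r.
Proof.
have /tuple_permP[r sort_r] : perm_eq [tuple g i | i < n] (sort_ffun g).
  by rewrite perm_sym perm_sort.
exists r => k; have /(congr1 (fun t => tnth t k)) := val_inj sort_r.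
by rewrite !tnth_mktuple.
Qed.

Definition sort_multiplicity (t : n.-tuple 'I_n) : nat :=
  #|[pred g : {ffun 'I_n -> 'I_n} | sort_ffun g == t]|.

Lemma sum_ffun_sort (V : nmodType) (G : n.-tuple 'I_n -> V) :
  \sum_(g : {ffun 'I_n -> 'I_n}) G (sort_ffun g) =
  \sum_(t in sorted_tuples) G t *+ sort_multiplicity t.
Proof.
rewrite (partition_big sort_ffun (mem sorted_tuples)) => [|g _]; last first.
  exact: sort_ffun_sorted.
apply: eq_bigr => t _; rewrite (eq_bigr (fun _ => G t)) => [|g /eqP -> //].
by rewrite sumr_const; congr (_ *+ _); apply: eq_card.
Qed.

End SortFfun.

Lemma card_sorted_tuplesE n : #|sorted_tuples n.+1| = 'C(2 * n.+1 - 1, n.+1 - 1).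
Proof.
have -> : (2 * n.+1 - 1 = n.+1 + n)%N by rewrite mul2n -addnn addSn subn1 addnC.
by rewrite card_sorted_tuples subn1 -[in RHS]bin_sub ?leq_addl // addnK.
Qed.

Lemma krylov_sym_sort_ffun (R : comNzRingType) n (A : 'M[R]_n.+1)
    (g : {ffun 'I_n.+1 -> 'I_n.+1}) :
  krylov_sym A g = krylov_sym A (tnth (sort_ffun g)).
Proof. by have [r /eq_krylov_sym ->] := sort_ffun_perm g; rewrite krylov_sym_perm. Qed.

Local Open Scope sesquilinear_scope.

Section Hermitian.
Variable C : numClosedFieldType.

Lemma sum_norm_permanent_colsub n (Q : 'M[C]_n) : Q \is unitarymx ->
  \sum_(g : {ffun 'I_n -> 'I_n}) `|permanent (colsub g Q)| ^+ 2 = n`!%:R.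
Proof.
move=> /unitarymxP QQt1.
have row_dot i i' : \sum_j Q i j * (Q i' j)^* = (i == i')%:R.
  have /matrixP/(_ i i') := QQt1; rewrite !mxE => <-.
  by apply: eq_bigr => j _; rewrite !mxE.
have prod_delta (p p' : 'S_n) : \prod_k ((p k == p' k)%:R : C) = (p == p')%:R.
  have [<-|neq_pp'] := eqVneq p p'; first by apply: big1 => k _; rewrite eqxx.
  have [k neq_k] : exists k, p k != p' k.
    apply/existsP; move: neq_pp'; apply: contraR => /existsPn eq_pp'.
    by apply/eqP/permP => k; apply/eqP/negPn/eq_pp'.
  by rewrite (bigD1 k) //= (negbTE neq_k) mul0r.
have norm_per g : `|permanent (colsub g Q)| ^+ 2 =
    \sum_(p : 'S_n) \sum_(p' : 'S_n) \prod_k (Q (p k) (g k) * (Q (p' k) (g k))^*).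
  rewrite normCK -permanent_tr rmorph_sum mulr_suml; apply: eq_bigr => p _.
  rewrite mulr_sumr; apply: eq_bigr => p' _; rewrite rmorph_prod -big_split.
  by apply: eq_bigr => k _; rewrite !mxE.
under eq_bigr do rewrite norm_per.
rewrite exchange_big; under eq_bigr do rewrite exchange_big.
(* The sum over g factors over k, each factor being an inner product of rows of Q. *)
under eq_bigr => p _ do under eq_bigr => p' _ do
  rewrite -(bigA_distr_bigA (fun k j => Q (p k) j * (Q (p' k) j)^*)).
under eq_bigr => p _ do under eq_bigr => p' _ do
  (under eq_bigr do rewrite row_dot; rewrite prod_delta).
have sum_delta (p : 'S_n) : \sum_(p' : 'S_n) ((p == p')%:R : C) = 1.
  by rewrite (bigD1 p) //= eqxx big1 ?addr0 // => p' /negbTE; rewrite eq_sym => ->.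
under eq_bigr do rewrite sum_delta.
by rewrite sumr_const card_Sn.
Qed.

Lemma hermitian_spectralE n (A : 'M[C]_n) : A \is hermsymmx ->
  A = (spectralmx A)^t* *m diag_mx (spectral_diag A) *m spectralmx A.
Proof.
move=> /hermitian_normalmx /orthomx_spectralP {1}->.
by rewrite invmx_unitary // spectral_unitarymx.
Qed.

Lemma sum_norm_krylov_sym_hermitian n (A : 'M[C]_n.+1) : A \is hermsymmx ->
  \sum_(g : {ffun 'I_n.+1 -> 'I_n.+1}) `|krylov_sym A g| ^+ 2 =
  n.+1`!%:R * \det (Vandermonde n.+1 (spectral_diag A)) ^+ 2.
Proof.
move=> hermA; have eA := hermitian_spectralE hermA.
have d_real : spectral_diag A \is a realmx := hermitian_spectral_diag_real hermA.
have Qunitary := spectral_unitarymx A.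
move: (spectralmx A) (spectral_diag A) => Q d in eA d_real Qunitary *.
have QQt1 : Q *m Q^t* = 1%:M by apply/unitarymxP.
have norm_detQt : `|\det (Q^t*)| ^+ 2 = 1.
  have conj_detQt : (\det (Q^t*))^* = \det Q.
    by rewrite -det_map_mx -map_mx_comp map_mx_id ?det_tr //; apply: conjCK.
  by rewrite normCK conj_detQt mulrC -det_mulmx QQt1 det1.
have V_real : \det (Vandermonde n.+1 d) \is Num.real.
  move/realmxC/matrixP in d_real.
  apply/CrealP; rewrite -det_map_mx; congr (\det _); apply/matrixP => i j.
  by have := d_real 0 j; rewrite !mxE rmorphXn /= => ->.
rewrite eA; under eq_bigr do
  rewrite (krylov_sym_conj_diag _ _ QQt1) !normrM !exprMn norm_detQt mul1r.
by rewrite -mulr_sumr sum_norm_permanent_colsub // real_normK // mulrC.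
Qed.

Lemma sum_sort_multiplicity_krylov_sym_hermitian n (A : 'M[C]_n.+1) :
  A \is hermsymmx ->
  \sum_(t in sorted_tuples n.+1)
     (sort_multiplicity t)%:R / n.+1`!%:R * `|krylov_sym A (tnth t)| ^+ 2 =
  \det (Vandermonde n.+1 (spectral_diag A)) ^+ 2.
Proof.
move=> hermA; have n_fact_neq0 : (n.+1`!%:R : C) != 0.
  by rewrite pnatr_eq0 -lt0n fact_gt0.
rewrite -(mulKf n_fact_neq0 (_ ^+ 2)) -sum_norm_krylov_sym_hermitian //.
under [in RHS]eq_bigr do rewrite krylov_sym_sort_ffun.
rewrite (sum_ffun_sort (fun t => `|krylov_sym A (tnth t)| ^+ 2)) mulr_sumr.
by apply: eq_bigr => t _; rewrite mulrAC mulr_natl mulrC.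
Qed.

End Hermitian.

Local Open Scope complex_scope.

Section RealPolynomials.
Variables (R : rcfType) (N : nat).
Implicit Types (q : {mpoly R[i][N]}) (x : 'I_N -> R).

Definition mpoly_coefmap (f : R[i] -> R) q : {mpoly R[N]} :=
  \sum_(m <- msupp q) f q@_m *: 'X_[m].

Lemma meval_coefmap (f : {additive R[i] -> R}) q x :
  (forall a c, f (a * c%:C) = f a * c) ->
  (mpoly_coefmap f q).@[x] = f q.@[fun j => (x j)%:C].
Proof.
move=> fM; rewrite /mpoly_coefmap raddf_sum mevalE raddf_sum; apply: eq_bigr => m _.
under [in RHS]eq_bigr do rewrite -rmorphXn.
by rewrite /= mevalZ mevalX -rmorph_prod fM mulrC.
Qed.

Lemma sum_sqr_norm_mpoly K (q : 'I_K -> {mpoly R[i][N]}) :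
  exists p : 'I_(2 * K) -> {mpoly R[N]}, forall x,
    (\sum_k (p k).@[x] ^+ 2)%:C = \sum_i `|(q i).@[fun j => (x j)%:C]| ^+ 2.
Proof.
have ReM (a : R[i]) (c : R) : complex.Re (a * c%:C) = complex.Re a * c.
  by case: a => a b /=; rewrite mulr0 subr0.
have ImM (a : R[i]) (c : R) : complex.Im (a * c%:C) = complex.Im a * c.
  by case: a => a b /=; rewrite mulr0 add0r.
rewrite mul2n -addnn.
exists (fun k => match split k with
  | inl i => mpoly_coefmap (@complex.Re R) (q i)
  | inr i => mpoly_coefmap (@complex.Im R) (q i) end) => x.
rewrite big_split_ord /= -big_split rmorph_sum; apply: eq_bigr => i _.
rewrite (unsplitK (inl _ i)) (unsplitK (inr _ i)) /=.
by rewrite !meval_coefmap // add_Re2_Im2.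
Qed.

End RealPolynomials.

Lemma disc_ofE m (s : seq CR) : size s = m ->
  disc_of s = \det (Vandermonde m (\row_(j < m) s`_j)) ^+ 2.
Proof.
move=> <-; rewrite det_Vandermonde /disc_of -prodrXl; apply: eq_bigr => i _.
by rewrite -prodrXl; apply: eq_bigr => j _; rewrite !mxE -sqrrN opprB.
Qed.

Lemma perm_disc_of (s1 s2 : seq CR) : perm_eq s1 s2 -> disc_of s1 = disc_of s2.
Proof.
move=> /(tuple_permP (t := in_tuple s2)) [p ->].
set m := size s2; rewrite !(disc_ofE (m := m)) ?size_tuple //.
have -> : Vandermonde m (\row_(j < m) [tuple tnth (in_tuple s2) (p i) | i < m]`_j) =
          col_perm p (Vandermonde m (\row_(j < m) s2`_j)).
  by apply/matrixP => i j; rewrite !mxE -(tnth_nth 0) tnth_mktuple (tnth_nth 0).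
by rewrite col_permE det_mulmx det_perm exprMn sqrr_sign mulr1.
Qed.

Lemma disc_of_hermitian n (A : 'M[CR]_n) s : A \is hermsymmx ->
  eigenvalue_list A s -> disc_of s = \det (Vandermonde n (spectral_diag A)) ^+ 2.
Proof.
move=> hermA eig_s; set d := spectral_diag A.
pose t := [tuple d 0 i | i < n].
have eig_t : char_poly A = \prod_(x <- t) ('X - x%:P).
  rewrite [in LHS](hermitian_spectralE hermA) char_poly_conj; last first.
    by apply/unitarymxP/spectral_unitarymx.
  rewrite char_poly_trig ?diag_mx_is_trig // big_tuple.
  by apply: eq_bigr => i _; rewrite tnth_mktuple mxE eqxx mulr1n.
rewrite (perm_disc_of (s2 := t)); last by apply: prod_XsubC_eq; rewrite -eig_s.
rewrite (disc_ofE (m := n)) ?size_tuple //; congr (\det (Vandermonde _ _) ^+ 2).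
by apply/rowP => j; rewrite !mxE -(tnth_nth 0) tnth_mktuple.
Qed.

Lemma is_hermitian_hermsymmx n (A : 'M[CR]_n) : is_hermitian A -> A \is hermsymmx.
Proof.
move=> /eqP hermA; rewrite qualifE expr0 scale1r; apply/eqP/matrixP => i j.
by have /matrixP/(_ j i) := hermA; rewrite !mxE.
Qed.

Definition coord_mx n : 'M[{mpoly CR[n * n + n * n]}]_n :=
  \matrix_(i, j) ('X_(lshift _ (mxvec_index i j)) +
                 'i%:MP * 'X_(rshift _ (mxvec_index i j))).

Lemma map_coord_mx n (A : 'M[CR]_n) :
  map_mx (meval (fun k => (herm_coords A k)%:C)) (coord_mx n) = A.
Proof.
apply/matrixP => i j; rewrite !mxE mevalD mevalM mevalC !mevalXU /herm_coords.
rewrite row_mxEl row_mxEr !mxvecE !mxE.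
by case: (A i j) => a b; simpc.
Qed.

Theorem corollary7p3 (n : nat) (hn : (2 <= n)%N) :
  exists p : 'I_(2 * 'C(2 * n - 1, n - 1)) -> {mpoly Rdefinitions.R[n * n + n * n]},
    forall (A : 'M[CR]_n), is_hermitian A ->
    forall s : seq CR, eigenvalue_list A s ->
      disc_of s = (\sum_k (herm_polyfun (p k) A) ^+ 2)%:C.
Proof.
case: n hn => [//|n] _.
pose c (t : n.+1.-tuple 'I_n.+1) : CR := sqrtC ((sort_multiplicity t)%:R / n.+1`!%:R).
have norm_c t : `|c t| ^+ 2 = (sort_multiplicity t)%:R / n.+1`!%:R.
  by rewrite ger0_norm ?sqrtCK // sqrtC_ge0 divr_ge0 ?ler0n.
have [p sum_p] := sum_sqr_norm_mpoly (fun i : 'I_#|sorted_tuples n.+1| =>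
  c (enum_val i) *: krylov_sym (coord_mx n.+1) (tnth (enum_val i))).
rewrite -card_sorted_tuplesE; exists p => A /is_hermitian_hermsymmx hermA s eig_s.
rewrite /herm_polyfun sum_p (disc_of_hermitian hermA eig_s).
rewrite -(sum_sort_multiplicity_krylov_sym_hermitian hermA) big_enum_val.
by apply: eq_bigr => i _; rewrite mevalZ map_krylov_sym map_coord_mx normrM exprMn norm_c.
Qed.
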